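(* Let $p$ be an odd prime, $R=F_p+vF_p$ with $v^2=v$, $\theta=\lambda+v\mu$ ($\lambda,\mu\in F_p$) a unit of $R$, and $R_n=R[x]/\langle x^n-\theta\rangle$. Let $C$ be an ideal in $R_n$. Then there exists a unique polynomial $g(x)=vg(x)^{\sigma}+(1-v)g(x)^{\tau}\in C$ such that $C=\langle g(x)\rangle$ with $g(x)^\sigma$ and $g(x)^\tau$ monic in $F_p[x]$; furthermore, $g(x)$ is a divisor of $x^n-\theta$. In particular, $R_n$ is a principal ideal ring.
   Context: Every element of $R$ is uniquely $va+(1-v)b$ with $a,b\in F_p$; define $\sigma,\tau:R\to F_p$ by $\sigma(va+(1-v)b)=a$, $\tau(va+(1-v)b)=b$. For $f(x)=\sum a_ix^i\in R[x]$ put $f(x)^\sigma=\sum\sigma(a_i)x^i$ and $f(x)^\tau=\sum\tau(a_i)x^i$, so $f(x)=vf(x)^\sigma+(1-v)f(x)^\tau$. $\langle g\rangle$ denotes the ideal generated by $g$. *)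

From HB Require Import structures.
From mathcomp Require Import all_boot all_order all_algebra.
From mathcomp Require Import ring.
Set Implicit Arguments. Unset Strict Implicit. Unset Printing Implicit Defensive.
Import GRing.Theory.
Local Open Scope ring_scope.

(* The ring R = F_p + v F_p with v^2 = v.  The element [mkR a b] stands for
   a + v b  (a, b in F_p); multiplication is
   (a + v b)(c + v d) = ac + v (ad + bc + bd), using v^2 = v. *)
Section Rdef.
Variable p : nat.

Record Rv := mkR { rv0 : 'F_p; rv1 : 'F_p }.

Definition Rv_to (x : Rv) := (rv0 x, rv1 x).
Definition Rv_of (x : 'F_p * 'F_p) := mkR x.1 x.2.
Lemma Rv_toK : cancel Rv_to Rv_of. Proof. by case. Qed.
HB.instance Definition _ := Choice.copy Rv (can_type Rv_toK).

Definition Rzero := mkR 0 0.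
Definition Ropp (x : Rv) := mkR (- rv0 x) (- rv1 x).
Definition Radd (x y : Rv) := mkR (rv0 x + rv0 y) (rv1 x + rv1 y).
Definition Rone := mkR 1 0.
Definition Rmul (x y : Rv) :=
  mkR (rv0 x * rv0 y) (rv0 x * rv1 y + rv1 x * rv0 y + rv1 x * rv1 y).

Lemma RaddA : associative Radd.
Proof. by case=> a b [c d] [e f]; rewrite /Radd /=; congr mkR; ring. Qed.
Lemma RaddC : commutative Radd.
Proof. by case=> a b [c d]; rewrite /Radd /=; congr mkR; ring. Qed.
Lemma Radd0 : left_id Rzero Radd.
Proof. by case=> a b; rewrite /Radd /=; congr mkR; ring. Qed.
Lemma RaddN : left_inverse Rzero Ropp Radd.
Proof. by case=> a b; rewrite /Radd /=; congr mkR; ring. Qed.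

HB.instance Definition _ := GRing.isZmodule.Build Rv RaddA RaddC Radd0 RaddN.

Lemma RmulA : associative Rmul.
Proof. by case=> a b [c d] [e f]; rewrite /Rmul /=; congr mkR; ring. Qed.
Lemma RmulC : commutative Rmul.
Proof. by case=> a b [c d]; rewrite /Rmul /=; congr mkR; ring. Qed.
Lemma Rmul1 : left_id Rone Rmul.
Proof. by case=> a b; rewrite /Rmul /=; congr mkR; ring. Qed.
Lemma RmulDl : left_distributive Rmul Radd.
Proof. by case=> a b [c d] [e f]; rewrite /Rmul /Radd /=; congr mkR; ring. Qed.
Lemma Rone_neq0 : Rone != Rzero.
Proof.
apply/eqP=> /(congr1 rv0) /= /eqP; by rewrite oner_eq0.
Qed.

HB.instance Definition _ :=
  GRing.Zmodule_isComNzRing.Build Rv RmulA RmulC Rmul1 RmulDl Rone_neq0.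

Definition iFp (a : 'F_p) : Rv := mkR a 0.
Definition vR : Rv := mkR 0 1.

Lemma vR_idem : vR * vR = vR.
Proof. by rewrite /GRing.mul /= /Rmul /vR /=; congr mkR; ring. Qed.

(* sigma, tau : R -> F_p, defined by sigma (v a + (1 - v) b) = a and
   tau (v a + (1 - v) b) = b.  Since a + v b = v (a + b) + (1 - v) a,
   we get the explicit formulas below. *)
Definition sigmaR (r : Rv) : 'F_p := rv0 r + rv1 r.
Definition tauR (r : Rv) : 'F_p := rv0 r.

Lemma sigma_tau_decomp (r : Rv) :
  r = vR * iFp (sigmaR r) + (1 - vR) * iFp (tauR r).
Proof.
case: r => a b; rewrite /GRing.mul /GRing.add /GRing.opp /= /Rmul /Radd /Ropp.
rewrite /vR /iFp /sigmaR /tauR /=; congr mkR; ring.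
Qed.

Lemma sigma_tau_unique (r : Rv) (a b : 'F_p) :
  r = vR * iFp a + (1 - vR) * iFp b -> sigmaR r = a /\ tauR r = b.
Proof.
move=> ->; rewrite /GRing.mul /GRing.add /GRing.opp /= /Rmul /Radd /Ropp.
rewrite /vR /iFp /sigmaR /tauR /=; split; ring.
Qed.

End Rdef.

Definition poly_sigma (p : nat) (f : {poly Rv p}) : {poly 'F_p} :=
  map_poly (@sigmaR p) f.
Definition poly_tau (p : nat) (f : {poly Rv p}) : {poly 'F_p} :=
  map_poly (@tauR p) f.

(* R_n = R[x] / <x^n - theta>.  For n >= 1, x^n - theta is monic of size > 1,
   so {poly %/ ('X^n - theta%:P)} (qpoly.v) is exactly this quotient ring. *)
Definition Rn (p n : nat) (theta : Rv p) := {poly %/ ('X^n - theta%:P : {poly Rv p})}.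

Definition toRn (p n : nat) (theta : Rv p) (f : {poly Rv p}) : Rn n theta :=
  in_qpoly ('X^n - theta%:P) f.

Definition is_ideal (A : comNzRingType) (C : {pred A}) : Prop :=
  0 \in C /\ (forall x y, x \in C -> y \in C -> x - y \in C)
  /\ (forall a x, x \in C -> a * x \in C).

Definition generates (A : comNzRingType) (C : {pred A}) (g : A) : Prop :=
  forall y, y \in C <-> exists a, y = a * g.

Definition unitR (A : comNzRingType) (x : A) : Prop := exists y, x * y = 1.

From HB Require Import structures.
From mathcomp Require Import all_boot all_order all_algebra.
From mathcomp Require Import ring.
From Stdlib Require Import Classical.
Set Implicit Arguments. Unset Strict Implicit. Unset Printing Implicit Defensive.
Import GRing.Theory.
Local Open Scope ring_scope.

(* Since [v] and [1 - v] are orthogonal idempotents, [R] is [F_p x F_p] and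
   [f |-> (f^sigma, f^tau)] identifies [R[x]] with [F_p[x] x F_p[x]].  An ideal
   [C] of [R_n] thus cuts out two ideals [C_v = {a | v a in C}] and
   [C_(1-v) = {b | (1 - v) b in C}] of the principal ideal domain [F_p[x]],
   both containing the image of [x^n - theta]; their monic generators [g1] and
   [g2] divide it, and [g = v g1 + (1 - v) g2] generates [C] and divides
   [x^n - theta].  Conversely, for any such generator [g'], [g'^sigma] and
   [g'^tau] generate [C_v] and [C_(1-v)], which forces [g' = g]. *)


Lemma poly_ideal_monic_generator (K : fieldType) (I : {poly K} -> Prop) :
    (forall a b, I a -> I b -> I (a - b)) -> (forall k a, I a -> I (k * a)) ->
    forall d, I d -> d != 0 -> exists2 g, g \is monic & forall a, I a <-> g %| a.
Proof.
move=> Isub Imul d Id d_neq0.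
suff [g Ig [g_neq0 gI]] : exists2 g, I g & g != 0 /\ forall a, I a -> g %| a.
  exists ((lead_coef g)^-1 *: g).
    by apply/monicP; rewrite lead_coefZ mulVf ?lead_coef_eq0.
  move=> a; rewrite dvdpZl ?invr_eq0 ?lead_coef_eq0 //; split; first exact: gI.
  by case/dvdpP=> k ->; apply: Imul.
elim: {d}(size d).+1 {-2}d (ltnSn (size d)) Id d_neq0 => [//|m IHm] d sz_d Id.
move=> d_neq0.
have [dI | ] := classic (forall a, I a -> d %| a); first by exists d.
move=> /not_all_ex_not [a /(imply_to_and (I a)) [Ia d_ndvd_a]].
have Ir : I (a %% d).
  have -> : a %% d = a - a %/ d * d.
    by apply/eqP; rewrite eq_sym subr_eq addrC -divp_eq.
  by apply: Isub => //; apply: Imul.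
apply: (IHm (a %% d)) => //.
  by rewrite -ltnS (leq_trans _ sz_d) // ltnS ltn_modp.
by apply/eqP => /modp_eq0P.
Qed.

Lemma monic_generator_unique (K : fieldType) (I : {poly K} -> Prop) g g' :
    g \is monic -> g' \is monic ->
    (forall a, I a <-> g %| a) -> (forall a, I a <-> g' %| a) -> g = g'.
Proof.
move=> g_monic g'_monic gI g'I; apply/eqP; rewrite -eqp_monic //.
by apply/andP; split; [apply/gI/g'I | apply/g'I/gI]; exact: dvdpp.
Qed.

Lemma ideal_memD (A : comNzRingType) (C : {pred A}) x y :
  is_ideal C -> x \in C -> y \in C -> x + y \in C.
Proof.
case=> C0 [CB _] Cx Cy; have -> : x + y = x - (0 - y) by rewrite sub0r opprK.
by apply: (CB) => //; apply: CB.
Qed.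

Section Quotient.
Variables (p n : nat) (theta : Rv p).
Local Notation f := ('X^n - theta%:P : {poly Rv p}).

HB.instance Definition _ := GRing.RMorphism.copy (toRn n theta) (in_qpoly f).

Lemma toRnK (y : Rn n theta) : toRn n theta (val y) = y.
Proof. by apply: val_inj; exact: in_qpoly_small (size_mk_monic y). Qed.

Hypothesis n_gt0 : (0 < n)%N.

Lemma mk_monic_modulus : mk_monic f = f.
Proof. by rewrite /mk_monic size_XnsubC // monicXnsubC //; case: n n_gt0. Qed.

Lemma toRn_modulus : toRn n theta f = 0.
Proof.
apply: val_inj; rewrite /= mk_monic_modulus Pdiv.RingMonic.rmodpp //.
exact: monicXnsubC.
Qed.

Lemma toRn_eq0 q : toRn n theta q = 0 <-> exists k, q = k * f.
Proof.
split=> [/(congr1 val) /= q_mod0 | [k ->]]; last first.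
  by rewrite rmorphM /= toRn_modulus mulr0.
exists (Pdiv.Ring.rdivp q f); rewrite /in_qpoly /= mk_monic_modulus in q_mod0.
by rewrite {1}(Pdiv.RingMonic.rdivp_eq (monicXnsubC theta n_gt0) q) q_mod0 addr0.
Qed.

End Quotient.

Section Components.
Variable p : nat.
Local Notation R := (Rv p).

Lemma sigmaR_is_zmod_morphism : zmod_morphism (@sigmaR p).
Proof. by case=> a b [c d]; rewrite /sigmaR /=; ring. Qed.
Lemma sigmaR_is_monoid_morphism : monoid_morphism (@sigmaR p).
Proof. by split=> [|[a b] [c d]]; rewrite /sigmaR /=; ring. Qed.
HB.instance Definition _ :=
  GRing.isZmodMorphism.Build R 'F_p (@sigmaR p) sigmaR_is_zmod_morphism.
HB.instance Definition _ :=
  GRing.isMonoidMorphism.Build R 'F_p (@sigmaR p) sigmaR_is_monoid_morphism.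
HB.instance Definition _ :=
  GRing.RMorphism.copy (@poly_sigma p) (map_poly (@sigmaR p)).

Lemma tauR_is_zmod_morphism : zmod_morphism (@tauR p).
Proof. by case=> a b [c d]. Qed.
Lemma tauR_is_monoid_morphism : monoid_morphism (@tauR p).
Proof. by split=> [|[a b] [c d]]. Qed.
HB.instance Definition _ :=
  GRing.isZmodMorphism.Build R 'F_p (@tauR p) tauR_is_zmod_morphism.
HB.instance Definition _ :=
  GRing.isMonoidMorphism.Build R 'F_p (@tauR p) tauR_is_monoid_morphism.
HB.instance Definition _ :=
  GRing.RMorphism.copy (@poly_tau p) (map_poly (@tauR p)).

Lemma iFp_is_zmod_morphism : zmod_morphism (@iFp p).
Proof. by move=> a b; congr mkR; rewrite /= subrr. Qed.
Lemma iFp_is_monoid_morphism : monoid_morphism (@iFp p).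
Proof. by split=> // a b; congr mkR; rewrite /= !mulr0 mul0r !addr0. Qed.
HB.instance Definition _ :=
  GRing.isZmodMorphism.Build 'F_p R (@iFp p) iFp_is_zmod_morphism.
HB.instance Definition _ :=
  GRing.isMonoidMorphism.Build 'F_p R (@iFp p) iFp_is_monoid_morphism.

Definition lift_poly (a : {poly 'F_p}) : {poly R} := map_poly (@iFp p) a.
HB.instance Definition _ := GRing.RMorphism.copy lift_poly (map_poly (@iFp p)).

(* [(pi, e)] is [(sigma, v)] or [(tau, 1 - v)]. *)
Section Idempotent.
Variables (pi : {rmorphism R -> 'F_p}) (e : R).
Hypotheses (pi_iFp : cancel (@iFp p) pi) (pi_e : pi e = 1)
  (mul_iFp_pi : forall r, e * iFp (pi r) = e * r).

Lemma map_lift_poly a : map_poly pi (lift_poly a) = a.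
Proof. by rewrite /lift_poly -map_poly_comp map_poly_id // => c _ /=. Qed.

Lemma mul_lift_map_poly q : e%:P * lift_poly (map_poly pi q) = e%:P * q.
Proof. by apply/polyP=> i; rewrite !coefCM /lift_poly !coef_map /= mul_iFp_pi. Qed.

Section Ideal.
Variables (n : nat) (theta : R) (C : {pred Rn n theta}).
Hypotheses (n_gt0 : (0 < n)%N) (C_ideal : is_ideal C).
Local Notation f := ('X^n - theta%:P : {poly R}).
Local Notation toR := (toRn n theta).

Definition component_ideal (a : {poly 'F_p}) : Prop :=
  toR (e%:P * lift_poly a) \in C.

Lemma component_idealB a b :
  component_ideal a -> component_ideal b -> component_ideal (a - b).
Proof.
case: C_ideal => _ [CB _] Ca Cb.
by rewrite /component_ideal rmorphB mulrBr rmorphB; exact: CB.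
Qed.

Lemma component_idealM k a : component_ideal a -> component_ideal (k * a).
Proof.
case: C_ideal => _ [_ CM] Ca.
by rewrite /component_ideal [lift_poly _]rmorphM mulrCA rmorphM; exact: CM.
Qed.

Lemma component_ideal_map q : toR q \in C -> component_ideal (map_poly pi q).
Proof.
case: C_ideal => _ [_ CM] Cq.
by rewrite /component_ideal mul_lift_map_poly rmorphM; exact: CM.
Qed.

Lemma component_ideal_monic_generator :
  exists2 g, g \is monic & forall a, component_ideal a <-> g %| a.
Proof.
have C0 : toR f \in C by rewrite toRn_modulus; case: C_ideal.
apply: (poly_ideal_monic_generator component_idealB component_idealM).
  exact: component_ideal_map C0.
rewrite rmorphB /= map_polyXn map_polyC /=.
exact: monic_neq0 (monicXnsubC (pi theta) n_gt0).
Qed.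

Lemma component_ideal_generated g : generates C (toR g) ->
  (exists h, f = g * h) -> forall a, component_ideal a <-> map_poly pi g %| a.
Proof.
move=> g_gen [h f_eq] a; split=> [Ca | /dvdpP [c ->]].
  have [w Ew] := (g_gen _).1 Ca.
  have [k Ek] : exists k, e%:P * lift_poly a - val w * g = k * f.
    by apply/toRn_eq0 => //; rewrite rmorphB /= Ew rmorphM /= (toRnK w) subrr.
  have pi_f : map_poly pi f = map_poly pi g * map_poly pi h.
    by rewrite f_eq rmorphM.
  have /(congr1 (map_poly pi)) := Ek.
  rewrite rmorphB !rmorphM /= map_polyC /= pi_e map_lift_poly mul1r pi_f => /eqP.
  rewrite subr_eq => /eqP ->.
  by rewrite dvdp_add ?dvdp_mulIr //; apply/dvdp_mull/dvdp_mulIl.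
have Cg : toR g \in C by apply/g_gen; exists 1; rewrite mul1r.
case: C_ideal => _ [_ CM].
rewrite /component_ideal [lift_poly _]rmorphM /= mulrCA mul_lift_map_poly.
by rewrite mulrA rmorphM; exact: CM.
Qed.

End Ideal.
End Idempotent.

Lemma sigmaR_iFp : cancel (@iFp p) (@sigmaR p).
Proof. by move=> a; rewrite /sigmaR /= addr0. Qed.
Lemma sigmaR_v : sigmaR (vR p) = 1.
Proof. by rewrite /sigmaR /= add0r. Qed.
Lemma mul_v_iFp_sigmaR r : vR p * iFp (sigmaR r) = vR p * r.
Proof. by case: r => a b; congr mkR; rewrite /sigmaR /=; ring. Qed.

Lemma tauR_iFp : cancel (@iFp p) (@tauR p).
Proof. by []. Qed.
Lemma tauR_1v : tauR (1 - vR p) = 1.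
Proof. by rewrite /tauR /= subr0. Qed.
Lemma mul_1v_iFp_tauR r : (1 - vR p) * iFp (tauR r) = (1 - vR p) * r.
Proof. by case: r => a b; congr mkR; rewrite /tauR /=; ring. Qed.

Definition vcomb (a b : {poly 'F_p}) : {poly R} :=
  (vR p)%:P * lift_poly a + (1 - vR p)%:P * lift_poly b.

Lemma poly_sigmaC (c : R) : poly_sigma c%:P = (sigmaR c)%:P.
Proof. exact: map_polyC. Qed.
Lemma poly_tauC (c : R) : poly_tau c%:P = (tauR c)%:P.
Proof. exact: map_polyC. Qed.

Lemma poly_sigma_lift a : poly_sigma (lift_poly a) = a.
Proof. rewrite /poly_sigma; exact: (map_lift_poly sigmaR_iFp). Qed.
Lemma poly_tau_lift a : poly_tau (lift_poly a) = a.
Proof. rewrite /poly_tau; exact: (map_lift_poly tauR_iFp). Qed.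

Lemma mul_v_lift_sigma q : (vR p)%:P * lift_poly (poly_sigma q) = (vR p)%:P * q.
Proof. rewrite /poly_sigma; exact: (mul_lift_map_poly mul_v_iFp_sigmaR). Qed.
Lemma mul_1v_lift_tau q :
  (1 - vR p)%:P * lift_poly (poly_tau q) = (1 - vR p)%:P * q.
Proof. rewrite /poly_tau; exact: (mul_lift_map_poly mul_1v_iFp_tauR). Qed.

Lemma poly_sigma_vcomb a b : poly_sigma (vcomb a b) = a.
Proof.
rewrite rmorphD !rmorphM /= !poly_sigmaC rmorphB rmorph1 /= sigmaR_v subrr.
by rewrite poly_sigma_lift mul1r mul0r addr0.
Qed.

Lemma poly_tau_vcomb a b : poly_tau (vcomb a b) = b.
Proof.
rewrite rmorphD !rmorphM /= !poly_tauC tauR_1v (_ : tauR (vR p) = 0) //.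
by rewrite !poly_tau_lift polyC0 mul1r mul0r add0r.
Qed.

Lemma vcomb_comps q : vcomb (poly_sigma q) (poly_tau q) = q.
Proof.
by rewrite /vcomb mul_v_lift_sigma mul_1v_lift_tau -mulrDl polyCB addrC subrK mul1r.
Qed.

Lemma comps_inj (q q' : {poly R}) :
  poly_sigma q = poly_sigma q' -> poly_tau q = poly_tau q' -> q = q'.
Proof.
by move=> eq_sigma eq_tau; rewrite -(vcomb_comps q) -(vcomb_comps q') eq_sigma eq_tau.
Qed.

Lemma dvdp_comps (g q : {poly R}) :
  poly_sigma g %| poly_sigma q -> poly_tau g %| poly_tau q -> exists h, q = h * g.
Proof.
move=> /dvdpP [h1 eq_sigma] /dvdpP [h2 eq_tau]; exists (vcomb h1 h2).
by apply: comps_inj; rewrite !rmorphM /= ?poly_sigma_vcomb ?poly_tau_vcomb.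
Qed.

End Components.

Section Generator.
Variables (p n : nat) (theta : Rv p) (C : {pred Rn n theta}).
Hypotheses (n_gt0 : (0 < n)%N) (C_ideal : is_ideal C).
Local Notation f := ('X^n - theta%:P : {poly Rv p}).
Local Notation toR := (toRn n theta).
Local Notation sigma_ideal := (component_ideal (vR p) C).
Local Notation tau_ideal := (component_ideal (1 - vR p) C).

Lemma vcomb_generator g1 g2 :
    (forall a, sigma_ideal a <-> g1 %| a) -> (forall a, tau_ideal a <-> g2 %| a) ->
  [/\ exists h, f = vcomb g1 g2 * h, toR (vcomb g1 g2) \in C
    & generates C (toR (vcomb g1 g2))].
Proof.
move=> g1_gen g2_gen; set g := vcomb g1 g2.
have dvd_of_mem q : toR q \in C -> exists h, q = h * g.
  move=> Cq; apply: dvdp_comps; rewrite ?poly_sigma_vcomb ?poly_tau_vcomb.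
    apply/g1_gen.
    exact: (component_ideal_map (@mul_v_iFp_sigmaR p) C_ideal Cq).
  apply/g2_gen.
  exact: (component_ideal_map (@mul_1v_iFp_tauR p) C_ideal Cq).
have Cg : toR g \in C.
  by rewrite rmorphD; apply: ideal_memD => //; [apply/g1_gen | apply/g2_gen].
split=> // [|y].
  have [|h ->] := dvd_of_mem f; first by rewrite toRn_modulus; case: C_ideal.
  by exists h; rewrite mulrC.
split=> [Cy | [a ->]]; last by case: C_ideal => _ [_]; apply.
have [|h val_y] := dvd_of_mem (val y); first by rewrite toRnK.
by exists (toR h); rewrite -rmorphM /= -val_y toRnK.
Qed.

End Generator.

Theorem corollary3p8 (p : nat) (n : nat) (lambda mu : 'F_p)
  (C : {pred Rn n (iFp lambda + vR p * iFp mu)}) :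
  prime p -> odd p -> (0 < n)%N ->
  unitR (iFp lambda + vR p * iFp mu) ->
  is_ideal C ->
  let theta := iFp lambda + vR p * iFp mu in
  let P := fun g : {poly Rv p} =>
    [/\ poly_sigma g \is monic, poly_tau g \is monic,
        (exists h : {poly Rv p}, 'X^n - theta%:P = g * h),
        toRn n theta g \in C & generates C (toRn n theta g)] in
  exists g : {poly Rv p}, P g /\ (forall g', P g' -> g' = g).
Proof.
move=> _ _ n_gt0 _ C_ideal theta P.
have [g1 g1_monic g1_gen] :=
  component_ideal_monic_generator (@mul_v_iFp_sigmaR p) n_gt0 C_ideal.
have [g2 g2_monic g2_gen] :=
  component_ideal_monic_generator (@mul_1v_iFp_tauR p) n_gt0 C_ideal.
have [f_dvd Cg g_gen] := vcomb_generator n_gt0 C_ideal g1_gen g2_gen.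
exists (vcomb g1 g2); split.
  by split; rewrite ?poly_sigma_vcomb ?poly_tau_vcomb.
move=> g' [g'_sigma_monic g'_tau_monic g'_dvd _ g'_gen].
apply: comps_inj; rewrite ?poly_sigma_vcomb ?poly_tau_vcomb.
  apply: (monic_generator_unique g'_sigma_monic g1_monic _ g1_gen).
  exact: (component_ideal_generated (@sigmaR_iFp p) (@sigmaR_v p)
    (@mul_v_iFp_sigmaR p) n_gt0 C_ideal g'_gen g'_dvd).
apply: (monic_generator_unique g'_tau_monic g2_monic _ g2_gen).
exact: (component_ideal_generated (@tauR_iFp p) (@tauR_1v p)
  (@mul_1v_iFp_tauR p) n_gt0 C_ideal g'_gen g'_dvd).
Qed.
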